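(* Let $G$ be a group containing a non-abelian torsion-free nilpotent subgroup. Then for no integer $N\geq 1$ is there an injective algebra morphism $\mathbb{Z}[G]\to M_N(\mathbb{C})$.
   Context: $\mathbb{Z}[G]$ is the integral group ring of $G$ and $M_N(\mathbb{C})$ the algebra of complex $N\times N$ matrices. *)

From HB Require Import structures.
From mathcomp Require Import all_boot all_order all_algebra.
From mathcomp Require Import finmap.
From mathcomp Require Import complex.
From mathcomp Require Import Rstruct.

Set Implicit Arguments.
Unset Strict Implicit.
Unset Printing Implicit Defensive.

Import Order.TTheory GRing.Theory Num.Theory.
Local Open Scope ring_scope.

Section GroupNotions.
Variable G : groupType.
Local Open Scope group_scope.

Definition is_subgroup (H : G -> Prop) : Prop :=
  [/\ H 1, (forall x y, H x -> H y -> H (x * y)) & (forall x, H x -> H x^-1)].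

Definition gen_subgroup (S : G -> Prop) : G -> Prop :=
  fun g => forall K, is_subgroup K -> (forall s, S s -> K s) -> K g.

(* lower central series of H: gamma_1(H) = H, gamma_{i+1}(H) = [gamma_i(H), H]
   (here indexed from 0) *)
Fixpoint lower_central (H : G -> Prop) (n : nat) : G -> Prop :=
  match n with
  | 0 => H
  | n'.+1 => gen_subgroup
      (fun g => exists x y, [/\ lower_central H n' x, H y & g = [~ x, y]])
  end.

Definition nilpotent_subgroup (H : G -> Prop) : Prop :=
  exists n, forall g, lower_central H n g -> g = 1.

Definition torsion_free_subgroup (H : G -> Prop) : Prop :=
  forall g n, H g -> (0 < n)%N -> g ^+ n = 1 -> g = 1.

Definition abelian_subgroup (H : G -> Prop) : Prop :=
  forall x y, H x -> H y -> x * y = y * x.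

End GroupNotions.

Section GroupRing.
Variable G : groupType.

Definition ZG := {fsfun G -> int with (0 : int)}.

Definition zg_add (a b : ZG) : ZG :=
  [fsfun g in (finsupp a `|` finsupp b)%fset => (a g + b g) | (0 : int)].

Definition zg_mul (a b : ZG) : ZG :=
  [fsfun g in [fset (x * y)%g | x in finsupp a, y in finsupp b]%fset =>
     (\sum_(h <- finsupp a) a h * b (h^-1 * g)%g) | (0 : int)].

Definition zg_one : ZG := [fsfun g in [fset (1%g : G)]%fset => (1 : int) | (0 : int)].

End GroupRing.

Definition C : Type := complex Rdefinitions.R.

Definition is_algebra_morphism (G : groupType) (N : nat)
    (phi : ZG G -> 'M[C]_N) : Prop :=
  [/\ (forall a b, phi (zg_add a b) = phi a + phi b),
      (forall a b, phi (zg_mul a b) = phi a *m phi b)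
    & phi (zg_one G) = 1%:M].

From HB Require Import structures.
From mathcomp Require Import all_boot all_order all_algebra.
From mathcomp Require Import finmap complex Rstruct.
From Stdlib Require Import Classical.

(* A non-abelian nilpotent group contains x, y whose commutator z is
   non-trivial and commutes with x and y; torsion-freeness makes z of infinite
   order.  In any representation rho, X Y = Y X Z with Z = rho z commuting with
   X = rho x and Y = rho y; restricting to the l-eigenspace of Z and taking
   determinants gives l ^+ r = 1, so every eigenvalue l_i of Z is a root of
   unity, l_i ^+ m_i = 1.  Then prod_i (z ^+ m_i - 1) is a non-zero element of
   Z[G], because multiplication by w - 1 is injective on finitely supported
   functions when w has infinite order, while its image prod_i (Z ^+ m_i - 1)
   is a multiple of the characteristic polynomial of Z evaluated at Z, which
   vanishes by Cayley-Hamilton. *)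

Set Implicit Arguments.
Unset Strict Implicit.
Unset Printing Implicit Defensive.

Import Order.TTheory GRing.Theory Num.Theory.
Local Open Scope ring_scope.

Definition infinite_order (G : groupType) (w : G) :=
  forall k, (0 < k)%N -> (w ^+ k)%g <> 1%g.

Section InfiniteOrder.
Variables (G : groupType) (w : G).
Hypothesis w_inf : infinite_order w.

Lemma infinite_order_expg_inj : injective (fun k => (w ^+ k)%g).
Proof.
suff le_inj i j : (i <= j)%N -> (w ^+ i = w ^+ j)%g -> i = j.
  move=> i j eq_ij; have [le_ij | /ltnW le_ji] := leqP i j; first exact: le_inj.
  by apply/esym/le_inj.
move=> le_ij; rewrite -(subnKC le_ij) expgnDr -{1}[(w ^+ i)%g]mulg1.
by move/mulgI/esym; case: (j - i)%N => [_ | d /w_inf-/(_ isT) //]; rewrite addn0.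
Qed.

Lemma infinite_orderX m : (0 < m)%N -> infinite_order (w ^+ m)%g.
Proof.
by move=> m_gt0 k k_gt0; rewrite -expgnA; apply: w_inf; rewrite muln_gt0 m_gt0.
Qed.

End InfiniteOrder.

Section GroupRing.
Variable G : groupType.
Implicit Types (a b : ZG G) (g v w : G).

Definition zg_delta w : ZG G := [fsfun g in [fset w]%fset => (1 : int) | (0 : int)].
Definition zg_zero : ZG G := [fsfun].
Definition zg_opp a : ZG G := [fsfun g in finsupp a => - a g | (0 : int)].

Lemma zg_deltaE w g : zg_delta w g = if g == w then 1 else 0.
Proof. by rewrite fsfunE inE. Qed.

Lemma zg_zeroE g : zg_zero g = 0.
Proof. by rewrite fsfunE. Qed.

Lemma zg_oppE a g : zg_opp a g = - a g.
Proof. by rewrite fsfunE; case: ifP => // /negbT/fsfun_dflt ->; rewrite oppr0. Qed.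

Lemma zg_addE a b g : zg_add a b g = a g + b g.
Proof.
rewrite fsfunE; case: ifP => //; rewrite inE => /norP[/fsfun_dflt -> /fsfun_dflt ->].
by rewrite addr0.
Qed.

Lemma zg_mulE a b g : zg_mul a b g = \sum_(h <- finsupp a) a h * b (h^-1 * g)%g.
Proof.
rewrite fsfunE; case: ifP => // /negP g_out; symmetry.
apply: big1_seq => h /andP[_ h_in].
have [hg_in | /fsfun_dflt ->] := boolP ((h^-1 * g)%g \in finsupp b).
  by case: g_out; rewrite -(mulVKg h g); apply: in_imfset2.
by rewrite mulr0.
Qed.

Lemma zg_oneE : zg_one G = zg_delta 1%g.
Proof. by []. Qed.

Lemma zg_delta_neq0 w : zg_delta w <> zg_zero.
Proof. by move/(congr1 (fun a => a w)); rewrite zg_deltaE zg_zeroE eqxx. Qed.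

Lemma zg_mul_deltaE w b g : zg_mul (zg_delta w) b g = b (w^-1 * g)%g.
Proof.
have supp_w : finsupp (zg_delta w) = [fset w]%fset.
  by apply/fsetP => g'; rewrite mem_finsupp zg_deltaE !inE; case: (g' == w).
by rewrite zg_mulE supp_w big_seq_fset1 zg_deltaE eqxx mul1r.
Qed.

Lemma zg_deltaM w v : zg_mul (zg_delta w) (zg_delta v) = zg_delta (w * v)%g.
Proof.
apply/fsfunP => g; rewrite zg_mul_deltaE !zg_deltaE.
by congr (if _ then _ else _); apply/eqP/eqP => [<- | ->]; rewrite ?mulVKg ?mulKg.
Qed.

(* [(delta w - 1) a = 0] makes [a] invariant under left translation by [w], so
   the finite support of [a] would contain the infinite orbit of any of its
   points. *)
Lemma zg_mul_delta_subr_neq0 w a : infinite_order w -> a <> zg_zero ->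
  zg_add (zg_mul (zg_delta w) a) (zg_opp a) <> zg_zero.
Proof.
move=> w_inf a_neq0 eq0.
have a_inv g : a (w * g)%g = a g.
  move: (congr1 (fun b => b (w * g)%g) eq0) => /=.
  by rewrite zg_addE zg_mul_deltaE zg_oppE zg_zeroE mulKg => /subr0_eq.
have a_invX k g : a (w ^+ k * g)%g = a g.
  by elim: k g => [|k IHk] g; rewrite ?mul1g // expgS -mulgA a_inv IHk.
have [g0 g0_in] : exists g0, g0 \in finsupp a.
  apply: NNPP => no_supp; apply: a_neq0; apply/fsfunP => g.
  by rewrite zg_zeroE fsfun_dflt //; apply/negP => g_in; apply: no_supp; exists g.
pose orbit := [seq (w ^+ k * g0)%g | k <- iota 0 (size (finsupp a)).+1].
have orbit_uniq : uniq orbit.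
  by rewrite map_inj_uniq ?iota_uniq // => i j /mulIg/infinite_order_expg_inj; apply.
have orbit_sub : {subset orbit <= finsupp a}.
  by move=> _ /mapP[k _ ->]; rewrite mem_finsupp a_invX -mem_finsupp.
by have := uniq_leq_size orbit_uniq orbit_sub; rewrite size_map size_iota ltnn.
Qed.

End GroupRing.

Lemma ex_boundary (P : nat -> Prop) n : P 0 -> ~ P n -> exists k, P k /\ ~ P k.+1.
Proof.
move=> P0; elim: n => [//|n IHn] nPn1.
by case: (classic (P n)) => [Pn | /IHn]; first exists n.
Qed.

Section NilpotentSubgroup.
Variables (G : groupType) (H : G -> Prop).
Hypothesis H_subgroup : is_subgroup H.
Local Open Scope group_scope.

Lemma subgroup_commg x y : H x -> H y -> H [~ x, y].
Proof.
case: H_subgroup => _ HM HV Hx Hy.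
by rewrite commgEl conjgE; apply: HM (HV _ Hx) (HM _ _ (HV _ Hy) (HM _ _ Hx Hy)).
Qed.

Lemma lower_central_sub k g : lower_central H k g -> H g.
Proof.
elim: k g => [//|k IHk] g /= gen_g; apply: gen_g => // _ [x [y [x_k Hy ->]]].
exact: subgroup_commg (IHk _ x_k) Hy.
Qed.

(* Take the last term [gamma_k] of the lower central series that does not
   centralise [H]: commutators [[a, b]] with [a] in [gamma_k] lie in
   [gamma_(k+1)], hence are central in [H]. *)
Lemma nilpotent_nonabelian_central_commutator :
  nilpotent_subgroup H -> ~ abelian_subgroup H ->
  exists x y, [/\ H x, H y, [~ x, y] <> 1, commute [~ x, y] x & commute [~ x, y] y].
Proof.
move=> [n gamma_n_trivial] nabH.
pose noncentral k := exists a b, [/\ lower_central H k a, H b & [~ a, b] <> 1].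
have noncentral0 : noncentral 0%N.
  apply: NNPP => central0; apply: nabH => x y Hx Hy; apply: NNPP => nxy.
  by apply: central0; exists x, y; split=> // /eqP/commgP.
have central_n : ~ noncentral n.
  by move=> [a [b [a_n _]]]; rewrite (gamma_n_trivial _ a_n) comm1g.
have [k [[a [b [a_k Hb ab_neq1]]] central_k1]] := ex_boundary noncentral0 central_n.
have ab_central h : H h -> commute [~ a, b] h.
  move=> Hh; apply/commgP/eqP; apply: NNPP => ne1; apply: central_k1.
  by exists [~ a, b], h; split=> // K _; apply; exists a, b.
have Ha := lower_central_sub a_k.
by exists a, b; split=> //; apply: ab_central.
Qed.

End NilpotentSubgroup.

Section CommutatorMatrices.
Variables (F : fieldType) (n : nat).
Implicit Types X Y Z : 'M[F]_n.+1.

Lemma conjmx_unit m (V : 'M[F]_(m, n.+1)) X : row_free V -> X \is a GRing.unit ->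
  stablemx V X -> stablemx V X^-1 -> conjmx V X \in unitmx.
Proof.
move=> freeV uX VX VXV.
have : conjmx V X *m conjmx V X^-1 = 1%:M.
  by rewrite -conjmxM ?inE // mulmxE mulrV // conjmx_scalar.
by case/mulmx1_unit.
Qed.

Lemma eigenspace_commutator_unity X Y Z (l : F) :
  X \is a GRing.unit -> Y \is a GRing.unit -> GRing.comm Z X -> GRing.comm Z Y ->
  X * Y = Y * X * Z -> l ^+ \rank (eigenspace Z l) = 1.
Proof.
move=> uX uY cZX cZY XY_YXZ; set V := row_base (eigenspace Z l).
have freeV : row_free V := row_base_free _.
have stableV A : GRing.comm Z A -> stablemx V A.
  by move=> cZA; rewrite stablemx_row_base comm_mx_stable_eigenspace.
have [VX VY VZ] := And3 (stableV _ cZX) (stableV _ cZY) (stableV _ (commr_refl Z)).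
have uXV := conjmx_unit freeV uX VX (stableV _ (commrV cZX)).
have uYV := conjmx_unit freeV uY VY (stableV _ (commrV cZY)).
have ZV : conjmx V Z = l%:M by apply: conjmx_eigenvalue; rewrite ?eq_row_base.
have /(congr1 determinant) : conjmx V X *m conjmx V Y
                              = conjmx V Y *m conjmx V X *m conjmx V Z.
  by rewrite -!conjmxM ?inE ?stablemxM // !mulmxE XY_YXZ.
have detYX_neq0 : \det (conjmx V Y) * \det (conjmx V X) != 0.
  by rewrite mulf_neq0 // -unitfE -unitmxE.
rewrite ZV !det_mulmx det_scalar [X in X = _]mulrC -[X in X = _]mulr1.
by move/(mulfI detYX_neq0)/esym.
Qed.

Lemma eigenvalue_commutator_unity X Y Z (l : F) :
  X \is a GRing.unit -> Y \is a GRing.unit -> GRing.comm Z X -> GRing.comm Z Y ->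
  X * Y = Y * X * Z -> eigenvalue Z l -> exists2 m, (0 < m)%N & m.-unity_root l.
Proof.
move=> uX uY cZX cZY XY_YXZ eig_l; exists (\rank (eigenspace Z l)).
  by rewrite lt0n mxrank_eq0.
by apply/unity_rootP; apply: eigenspace_commutator_unity XY_YXZ.
Qed.

End CommutatorMatrices.

Section GroupRingRepresentation.
Variables (G : groupType) (n : nat) (phi : ZG G -> 'M[C]_n.+1).
Hypothesis phi_morph : is_algebra_morphism phi.

Local Notation rho g := (phi (zg_delta g)).

Lemma phi_zero : phi (zg_zero G) = 0.
Proof.
case: phi_morph => phiD _ _; apply: (addrI (phi (zg_zero G))).
rewrite -phiD addr0; congr phi.
by apply/fsfunP => g; rewrite zg_addE zg_zeroE addr0.
Qed.

Lemma phi_opp a : phi (zg_opp a) = - phi a.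
Proof.
case: phi_morph => phiD _ _; apply/esym/addr0_eq; rewrite -phiD -phi_zero; congr phi.
by apply/fsfunP => g; rewrite zg_addE zg_oppE zg_zeroE subrr.
Qed.

Lemma rhoM g h : rho (g * h)%g = rho g * rho h.
Proof. by case: phi_morph => _ phiM _; rewrite -zg_deltaM phiM. Qed.

Lemma rho1 : rho 1%g = 1.
Proof. by case: phi_morph => _ _ phi1; rewrite -zg_oneE phi1. Qed.

Lemma rho_unit g : rho g \is a GRing.unit.
Proof.
by apply/unitrP; exists (rho g^-1%g); rewrite -!rhoM mulgV mulVg rho1.
Qed.

Lemma rhoX g k : rho (g ^+ k)%g = rho g ^+ k.
Proof. by elim: k => [|k IHk]; rewrite ?rho1 // expgS exprS rhoM IHk. Qed.

Lemma phi_mul_delta_subr w a :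
  phi (zg_add (zg_mul (zg_delta w) a) (zg_opp a)) = (rho w - 1) * phi a.
Proof.
by case: phi_morph => phiD phiM _; rewrite phiD phiM phi_opp mulrBl mul1r mulmxE.
Qed.

Lemma rho_commutator_unity x y :
  commute [~ x, y]%g x -> commute [~ x, y]%g y ->
  forall l, eigenvalue (rho [~ x, y]%g) l -> exists2 m, (0 < m)%N & m.-unity_root l.
Proof.
move=> zx zy l; apply: (eigenvalue_commutator_unity (rho_unit x) (rho_unit y)).
- by rewrite /GRing.comm -!rhoM zx.
- by rewrite /GRing.comm -!rhoM zy.
- by rewrite -!rhoM -commgC.
Qed.

Lemma zg_unity_root_annihilator w (s : seq C) : infinite_order w ->
  {in s, forall l, exists2 m, (0 < m)%N & m.-unity_root l} ->
  exists2 a, a <> zg_zero G &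
    exists2 P, \prod_(l <- s) ('X - l%:P) %| P & phi a = horner_mx (rho w) P.
Proof.
move=> w_inf; elim: s => [|l s IHs] s_unity.
  exists (zg_one G); first by rewrite zg_oneE; apply: zg_delta_neq0.
  by exists 1; rewrite ?big_nil ?rmorph1 //; case: phi_morph.
have [m m_gt0 l_unity] := s_unity l (mem_head l s).
have [a a_neq0 [P sP aP]] :=
  IHs (fun l' l'_s => s_unity l' (@mem_behead _ (l :: s) l' l'_s)).
exists (zg_add (zg_mul (zg_delta (w ^+ m)%g) a) (zg_opp a)).
  exact: zg_mul_delta_subr_neq0 (infinite_orderX w_inf m_gt0) a_neq0.
exists (('X^m - 1) * P); first by rewrite big_cons dvdp_mul // dvdp_XsubCl.
by rewrite phi_mul_delta_subr aP rhoX rmorphM rmorphB rmorphXn rmorph1 /= horner_mx_X.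
Qed.

Lemma not_injective_unity_eigenvalues w : infinite_order w ->
  (forall l, eigenvalue (rho w) l -> exists2 m, (0 < m)%N & m.-unity_root l) ->
  ~ injective phi.
Proof.
move=> w_inf eig_unity phi_inj.
have [s char_s] := closed_field_poly_normal (char_poly (rho w)).
rewrite (monicP (char_poly_monic _)) scale1r in char_s.
have [|a a_neq0 [P]] := @zg_unity_root_annihilator w s w_inf.
  by move=> l l_s; apply: eig_unity; rewrite eigenvalue_root_char char_s root_prod_XsubC.
rewrite -char_s => /dvdpP[q ->] aP; apply: a_neq0; apply: phi_inj.
by rewrite aP phi_zero rmorphM /= Cayley_Hamilton mulr0.
Qed.

End GroupRingRepresentation.

Theorem mainTheorem3 (G : groupType) :
  (exists H : G -> Prop,
     [/\ is_subgroup H, nilpotent_subgroup H, torsion_free_subgroup H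
       & ~ abelian_subgroup H]) ->
  forall (N : nat), (1 <= N)%N ->
  ~ (exists phi : ZG G -> 'M[C]_N,
       is_algebra_morphism phi /\ injective phi).
Proof.
move=> [H [sH nilH tfH nabH]] [//|n] _ [phi [phi_morph phi_inj]].
have [x [y [Hx Hy z_neq1 zx zy]]] := nilpotent_nonabelian_central_commutator sH nilH nabH.
have z_inf : infinite_order [~ x, y]%g.
  by move=> k k_gt0 /(tfH _ _ (subgroup_commg sH Hx Hy) k_gt0).
apply: (not_injective_unity_eigenvalues phi_morph z_inf) phi_inj.
exact: (rho_commutator_unity phi_morph zx zy).
Qed.
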